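(* The set of functors $\{iso_V\mid V\in\mathcal{S}\}$ is a set of projective generators, and also a set of injective cogenerators, of $\mathcal{F}_{iso}$, where $\mathcal{S}$ is a set of representatives of the isometry classes of finite-dimensional (possibly degenerate) quadratic spaces over $\mathbb{F}_2$.
   Context: $\mathcal{E}$: all $\mathbb{F}_2$-vector spaces. $\mathcal{E}_q^{deg}$: objects finite-dimensional quadratic spaces over $\mathbb{F}_2$ (possibly degenerate), morphisms injective linear maps preserving quadratic forms. $\mathrm{Sp}(\mathcal{E}_q^{deg})$: same objects, morphisms spans $[V\leftarrow D\rightarrow W]$ up to iso of $D$, composed by pullback. $\mathcal{F}_{iso}=\mathrm{Func}(\mathrm{Sp}(\mathcal{E}_q^{deg}),\mathcal{E})$. $Q_V=\mathbb{F}_2[\mathrm{Hom}_{\mathrm{Sp}(\mathcal{E}_q^{deg})}(V,-)]$; $DF=(-)^*\circ F\circ tr^{op}$ with $tr[V\leftarrow X\rightarrow W]=[W\leftarrow X\rightarrow V]$; $a_V:Q_V\to DQ_V$ corresponds by Yoneda to the linear form on $\mathbb{F}_2[\mathrm{End}(V)]$ equal to $1$ on $\mathrm{Id}_V$ and $0$ on all other basis elements; the isotropic functor $iso_V$ is the image of $a_V$. *)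

From HB Require Import structures.
From mathcomp Require Import all_boot all_order all_algebra.
Set Implicit Arguments. Unset Strict Implicit. Unset Printing Implicit Defensive.
Import GRing.Theory.
Local Open Scope ring_scope.

Notation F2 := ('F_2)%type.

Definition linmap (U V : lmodType F2) (f : U -> V) : Prop :=
  forall (a : F2) (u v : U), f (a *: u + v) = a *: f u + f v.

Definition polar n (q : 'rV[F2]_n -> F2) (x y : 'rV[F2]_n) : F2 :=
  q (x + y) - q x - q y.

Definition is_quadratic_form n (q : 'rV[F2]_n -> F2) : Prop :=
  (forall (a : F2) x, q (a *: x) = a ^+ 2 * q x) /\
  (forall (a : F2) x y z, polar q (a *: x + y) z = a * polar q x z + polar q y z) /\
  (forall (a : F2) x y z, polar q z (a *: x + y) = a * polar q z x + polar q z y).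

Record qspace := QSpace {
  qdim : nat;
  qform : 'rV[F2]_qdim -> F2;
  qform_quad : is_quadratic_form qform }.

Arguments qform : clear implicits.
Notation vec V := 'rV[F2]_(qdim V).

Definition isometric (V W : qspace) : Prop :=
  exists f : vec V -> vec W,
    linmap f /\ bijective f /\ forall x, qform W (f x) = qform V x.

Definition is_sphom (V W : qspace) (S : {set vec V * vec W}) : bool :=
  [&& (0, 0) \in S,
      [forall s in S, forall t in S, (s.1 + t.1, s.2 + t.2) \in S],
      [forall a : F2, forall s in S, (a *: s.1, a *: s.2) \in S],
      [forall s in S, forall t in S, (s.1 == t.1) ==> (s == t)],
      [forall s in S, forall t in S, (s.2 == t.2) ==> (s == t)] &
      [forall s in S, qform W s.2 == qform V s.1]].

Definition SpHom (V W : qspace) := {S : {set vec V * vec W} | is_sphom S}.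

Lemma sphomP (V W : qspace) (S : {set vec V * vec W}) :
  reflect
    ((0, 0) \in S /\
        (forall s t, s \in S -> t \in S -> (s.1 + t.1, s.2 + t.2) \in S) /\
        (forall (a : F2) s, s \in S -> (a *: s.1, a *: s.2) \in S) /\
        (forall s t, s \in S -> t \in S -> s.1 = t.1 -> s = t) /\
        (forall s t, s \in S -> t \in S -> s.2 = t.2 -> s = t) /\
        (forall s, s \in S -> qform W s.2 = qform V s.1))
    (is_sphom S).
Proof.
apply: (iffP idP).
  case/and5P=> H0 /forall_inP HD /forallP HZ /forall_inP H1 /andP[/forall_inP H2 /forall_inP HQ].
  do ![split] => //.
  - by move=> s t sS tS; move/forall_inP: (HD s sS); apply.
  - by move=> a s sS; move/forall_inP: (HZ a); apply.
  - by move=> s t sS tS e; apply/eqP; move/forall_inP: (H1 s sS) => /(_ t tS); rewrite e eqxx.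
  - by move=> s t sS tS e; apply/eqP; move/forall_inP: (H2 s sS) => /(_ t tS); rewrite e eqxx.
  - by move=> s sS; apply/eqP; apply: HQ.
case=> H0 [HD [HZ [H1 [H2 HQ]]]]; apply/and5P; split=> //; last apply/andP; try split.
- by apply/forall_inP=> s sS; apply/forall_inP=> t tS; apply: HD.
- by apply/forallP=> a; apply/forall_inP=> s sS; apply: HZ.
- by apply/forall_inP=> s sS; apply/forall_inP=> t tS; apply/implyP=> /eqP e; rewrite (H1 s t).
- by apply/forall_inP=> s sS; apply/forall_inP=> t tS; apply/implyP=> /eqP e; rewrite (H2 s t).
- by apply/forall_inP=> s sS; rewrite HQ.
Qed.

Definition spid_set (V : qspace) : {set vec V * vec V} :=
  [set p | p.1 == p.2].
Definition sptr_set (V W : qspace) (S : {set vec V * vec W}) : {set vec W * vec V} :=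
  [set p | (p.2, p.1) \in S].
Definition spcomp_set (U V W : qspace) (S : {set vec U * vec V})
    (T : {set vec V * vec W}) : {set vec U * vec W} :=
  [set p | [exists w, ((p.1, w) \in S) && ((w, p.2) \in T)]].

Lemma spid_ok (V : qspace) : is_sphom (spid_set V).
Proof.
apply/sphomP; do ![split].
- by rewrite inE.
- by move=> [x y] [x' y']; rewrite !inE /= => /eqP-> /eqP->.
- by move=> a [x y]; rewrite !inE /= => /eqP->.
- by move=> [x y] [x' y']; rewrite !inE /= => /eqP-> /eqP-> /= ->.
- by move=> [x y] [x' y']; rewrite !inE /= => /eqP-> /eqP-> /= ->.
- by move=> [x y]; rewrite !inE /= => /eqP->.
Qed.

Lemma sptr_ok (V W : qspace) (S : {set vec V * vec W}) :
  is_sphom S -> is_sphom (sptr_set S).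
Proof.
case/sphomP=> H0 [HD [HZ [H1 [H2 HQ]]]]; apply/sphomP; do ![split].
- by rewrite inE.
- by move=> [x y] [x' y']; rewrite !inE /= => sS tS; apply: (HD (y, x) (y', x')).
- by move=> a [x y]; rewrite !inE /= => sS; apply: (HZ a (y, x)).
- move=> [x y] [x' y']; rewrite !inE /= => sS tS e.
  by have [] := H2 (y, x) (y', x') sS tS e => -> ->.
- move=> [x y] [x' y']; rewrite !inE /= => sS tS e.
  by have [] := H1 (y, x) (y', x') sS tS e => -> ->.
- by move=> [x y]; rewrite !inE /= => sS; rewrite (HQ (y, x)).
Qed.

Lemma spcomp_ok (U V W : qspace) (S : {set vec U * vec V})
    (T : {set vec V * vec W}) :
  is_sphom S -> is_sphom T -> is_sphom (spcomp_set S T).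
Proof.
case/sphomP=> H0 [HD [HZ [H1 [H2 HQ]]]]; case/sphomP=> K0 [KD [KZ [K1 [K2 KQ]]]].
apply/sphomP; do ![split].
- by rewrite inE; apply/existsP; exists 0; rewrite H0 K0.
- move=> [x y] [x' y']; rewrite !inE /= => /existsP[w /andP[s1 s2]] /existsP[w' /andP[t1 t2]].
  apply/existsP; exists (w + w').
  by rewrite (HD (x, w) (x', w')) // (KD (w, y) (w', y')).
- move=> a [x y]; rewrite !inE /= => /existsP[w /andP[s1 s2]].
  by apply/existsP; exists (a *: w); rewrite (HZ a (x, w)) // (KZ a (w, y)).
- move=> [x y] [x' y']; rewrite !inE /= => /existsP[w /andP[s1 s2]] /existsP[w' /andP[t1 t2]] e.
  case: (H1 (x, w) (x', w') s1 t1 e) => ex ew; subst x' w'.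
  by case: (K1 (w, y) (w, y') s2 t2 erefl) => ->.
- move=> [x y] [x' y']; rewrite !inE /= => /existsP[w /andP[s1 s2]] /existsP[w' /andP[t1 t2]] e.
  case: (K2 (w, y) (w', y') s2 t2 e) => ew ey; subst w' y'.
  by case: (H2 (x, w) (x', w) s1 t1 erefl) => ->.
- move=> [x y]; rewrite !inE /= => /existsP[w /andP[s1 s2]].
  by rewrite (KQ (w, y)) // (HQ (x, w)).
Qed.

Lemma sptr_comp_set (U V W : qspace) (S : {set vec U * vec V})
    (T : {set vec V * vec W}) :
  sptr_set (spcomp_set S T) = spcomp_set (sptr_set T) (sptr_set S).
Proof.
rewrite /sptr_set /spcomp_set.
apply/setP=> -[x y]; rewrite !inE /=.
by apply/existsP/existsP=> -[w]; rewrite ?inE /= => /andP[h1 h2]; exists w;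
  rewrite ?inE /= ?h1 ?h2.
Qed.

Lemma spcompA_set (U V W X : qspace) (S : {set vec U * vec V})
    (T : {set vec V * vec W}) (R : {set vec W * vec X}) :
  spcomp_set (spcomp_set S T) R = spcomp_set S (spcomp_set T R).
Proof.
rewrite /spcomp_set.
apply/setP=> -[x y]; rewrite !inE /=; apply/existsP/existsP.
  case=> w /andP[]; rewrite inE /= => /existsP[v /andP[h1 h2]] h3.
  by exists v; rewrite h1 inE; apply/existsP; exists w; rewrite h2.
case=> v /andP[h1]; rewrite inE /= => /existsP[w /andP[h2 h3]].
by exists w; rewrite h3 inE andbT; apply/existsP; exists v; rewrite h1.
Qed.

Lemma spcomp1s_set (V W : qspace) (S : {set vec V * vec W}) :
  spcomp_set (spid_set V) S = S.
Proof.
rewrite /sptr_set /spcomp_set /spid_set.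
apply/setP=> -[x y]; rewrite !inE /=; apply/existsP/idP.
  by case=> w /andP[]; rewrite inE /= => /eqP->.
by move=> h; exists x; rewrite inE eqxx.
Qed.

Lemma spcomps1_set (V W : qspace) (S : {set vec V * vec W}) :
  spcomp_set S (spid_set W) = S.
Proof.
rewrite /sptr_set /spcomp_set /spid_set.
apply/setP=> -[x y]; rewrite !inE /=; apply/existsP/idP.
  by case=> w /andP[h]; rewrite inE /= => /eqP<-.
by move=> h; exists y; rewrite inE eqxx andbT.
Qed.

Lemma sptr_id_set (V : qspace) : sptr_set (spid_set V) = spid_set V.
Proof.
rewrite /sptr_set /spcomp_set /spid_set. by apply/setP=> -[x y]; rewrite !inE eq_sym. Qed.

Definition spid (V : qspace) : SpHom V V := exist (fun S => is_sphom S) _ (spid_ok V).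
Definition sptr (V W : qspace) (f : SpHom V W) : SpHom W V :=
  exist (fun S => is_sphom S) _ (sptr_ok (valP f)).
(* [spcomp f g] is "f, then g" (i.e. g o f). *)
Definition spcomp (U V W : qspace) (f : SpHom U V) (g : SpHom V W) : SpHom U W :=
  exist (fun S => is_sphom S) _ (spcomp_ok (valP f) (valP g)).

Lemma sptr_comp (U V W : qspace) (f : SpHom U V) (g : SpHom V W) :
  sptr (spcomp f g) = spcomp (sptr g) (sptr f).
Proof. by apply: val_inj; rewrite /= sptr_comp_set. Qed.
Lemma spcompA (U V W X : qspace) (f : SpHom U V) (g : SpHom V W) (h : SpHom W X) :
  spcomp (spcomp f g) h = spcomp f (spcomp g h).
Proof. by apply: val_inj; rewrite /= spcompA_set. Qed.
Lemma spcomp1s (V W : qspace) (f : SpHom V W) : spcomp (spid V) f = f.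
Proof. by apply: val_inj; rewrite /= spcomp1s_set. Qed.
Lemma spcomps1 (V W : qspace) (f : SpHom V W) : spcomp f (spid W) = f.
Proof. by apply: val_inj; rewrite /= spcomps1_set. Qed.
Lemma sptr_id (V : qspace) : sptr (spid V) = spid V.
Proof. by apply: val_inj; rewrite /= sptr_id_set. Qed.

Unset Implicit Arguments.
Record Func := MkFunc {
  Fob :> qspace -> lmodType F2;
  Fmor : forall {V W : qspace}, SpHom V W -> Fob V -> Fob W;
  Fmor_linear : forall V W (f : SpHom V W), linmap (Fmor f);
  Fmor_id : forall V (x : Fob V), Fmor (spid V) x = x;
  Fmor_comp : forall U V W (f : SpHom U V) (g : SpHom V W) (x : Fob U),
      Fmor (spcomp f g) x = Fmor g (Fmor f x) }.

Record NatTrans (F G : Func) := MkNatTrans {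
  nt :> forall V : qspace, F V -> G V;
  nt_linear : forall V : qspace, linmap (nt V);
  nt_natural : forall V W (f : SpHom V W) (x : F V),
      nt W (Fmor F f x) = Fmor G f (nt V x) }.
Arguments nt {F G} n V _.
Set Implicit Arguments.

Definition nt_eq (F G : Func) (a b : NatTrans F G) : Prop :=
  forall V (x : F V), a V x = b V x.

Definition is_epi (F G : Func) (p : NatTrans F G) : Prop :=
  forall (H : Func) (a b : NatTrans G H),
    (forall V (x : F V), a V (p V x) = b V (p V x)) -> nt_eq a b.
Definition is_mono (F G : Func) (i : NatTrans F G) : Prop :=
  forall (H : Func) (a b : NatTrans H F),
    (forall V (x : H V), i V (a V x) = i V (b V x)) -> nt_eq a b.

Definition is_projective (P : Func) : Prop :=
  forall (F G : Func) (p : NatTrans F G) (h : NatTrans P G),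
    is_epi p -> exists l : NatTrans P F, forall V (x : P V), p V (l V x) = h V x.
Definition is_injective (I : Func) : Prop :=
  forall (F G : Func) (i : NatTrans F G) (h : NatTrans F I),
    is_mono i -> exists e : NatTrans G I, forall V (x : F V), e V (i V x) = h V x.

Definition is_generating (J : Type) (P : J -> Func) : Prop :=
  forall (F G : Func) (a b : NatTrans F G), ~ nt_eq a b ->
    exists (j : J) (h : NatTrans (P j) F),
      ~ (forall V (x : P j V), a V (h V x) = b V (h V x)).
Definition is_cogenerating (J : Type) (P : J -> Func) : Prop :=
  forall (F G : Func) (a b : NatTrans F G), ~ nt_eq a b ->
    exists (j : J) (h : NatTrans G (P j)),
      ~ (forall V (x : F V), h V (a V x) = h V (b V x)).

(* Q_V(W) = F_2[Hom(V,W)] is modelled as functions Hom(V,W) -> F_2      *)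
(* (Hom(V,W) is finite); DQ_V(W) = Q_V(W)^* is identified with           *)
(* functions Hom(V,W) -> F_2 via the dual basis of the basis Hom(V,W). *)
Notation FF V W := {ffun SpHom V W -> F2^o}.

(* Q_V on morphisms: f |-> h o f on basis elements. *)
Definition Qmap (V W X : qspace) (h : SpHom W X) (phi : FF V W) : FF V X :=
  [ffun f' => \sum_(f : SpHom V W | spcomp f h == f') phi f].

(* DQ_V on morphisms: DQ_V(h) = Q_V(tr h)^*. *)
Definition DQmap (V W X : qspace) (h : SpHom W X) (l : FF V W) : FF V X :=
  [ffun g => l (spcomp g (sptr h))].

(* a_V(W) : Q_V(W) -> DQ_V(W); on basis elements f, g:                   *)
(* a_V(W)(f)(g) = delta_{Id_V}(tr(f) o g).                                *)
Definition aV (V W : qspace) (phi : FF V W) : FF V W :=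
  [ffun g => \sum_(f : SpHom V W) phi f * ((spcomp g (sptr f) == spid V)%:R)].

Lemma aV_linear (V W : qspace) (a : F2) (phi psi : FF V W) :
  aV (a *: phi + psi) = a *: aV phi + aV psi.
Proof.
apply/ffunP=> g; rewrite !ffunE scaler_sumr -big_split /=.
by apply: eq_bigr=> f _; rewrite !ffunE mulrDl scalerAl.
Qed.

Lemma aV0 (V W : qspace) : aV (0 : FF V W) = 0.
Proof. by apply/ffunP=> g; rewrite !ffunE big1 // => f _; rewrite ffunE mul0r. Qed.

Lemma aVD (V W : qspace) (p q : FF V W) : aV (p + q) = aV p + aV q.
Proof. by have := aV_linear 1 p q; rewrite !scale1r. Qed.

Lemma aVZ (V W : qspace) (a : F2) (p : FF V W) : aV (a *: p) = a *: aV p.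
Proof. by have := aV_linear a p 0; rewrite !addr0 aV0 addr0. Qed.

Lemma aV_natural (V W X : qspace) (h : SpHom W X) (phi : FF V W) :
  DQmap h (aV phi) = aV (Qmap h phi).
Proof.
apply/ffunP=> g; rewrite !ffunE.
under [RHS]eq_bigr do rewrite ffunE mulr_suml.
rewrite (exchange_big_dep xpredT) //=.
apply: eq_bigr=> f _; rewrite (big_pred1 (spcomp f h)); last by move=> f'; rewrite eq_sym.
by rewrite sptr_comp spcompA.
Qed.

Definition iso_img (V W : qspace) : {pred FF V W} :=
  fun l => [exists phi : FF V W, aV phi == l].
Arguments iso_img : clear implicits.

Lemma iso_imgE (V W : qspace) (l : FF V W) :
  (l \in iso_img V W) = [exists phi : FF V W, aV phi == l].
Proof. by []. Qed.

Lemma iso_img_closed (V W : qspace) : GRing.subsemimod_closed (iso_img V W).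
Proof.
split; first split.
- by rewrite iso_imgE; apply/existsP; exists 0; rewrite aV0.
- move=> u v; rewrite !iso_imgE => /existsP[p /eqP<-] /existsP[q /eqP<-].
  apply/existsP; exists (p + q).
  by rewrite aVD.
- move=> a u; rewrite !iso_imgE => /existsP[p /eqP<-]; apply/existsP; exists (a *: p).
  by rewrite aVZ.
Qed.

HB.instance Definition _ (V W : qspace) :=
  GRing.isSubmodClosed.Build F2 (FF V W) (iso_img V W) (iso_img_closed V W).

Inductive iso_ob (V W : qspace) : predArgType :=
  IsoElt (l : FF V W) of l \in iso_img V W.
Definition iso_val (V W : qspace) (x : iso_ob V W) : FF V W :=
  let: IsoElt l _ := x in l.
HB.instance Definition _ (V W : qspace) := [isSub of iso_ob V W for @iso_val V W].
HB.instance Definition _ (V W : qspace) := [Choice of iso_ob V W by <:].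
HB.instance Definition _ (V W : qspace) := [SubChoice_isSubZmodule of iso_ob V W by <:].
HB.instance Definition _ (V W : qspace) := [SubZmodule_isSubLmodule of iso_ob V W by <:].

Lemma DQmap_img (V W X : qspace) (h : SpHom W X) (l : FF V W) :
  l \in iso_img V W -> DQmap h l \in iso_img V X.
Proof.
rewrite !iso_imgE => /existsP[p /eqP<-]; apply/existsP; exists (Qmap h p).
by rewrite aV_natural.
Qed.

Definition iso_mor (V W X : qspace) (h : SpHom W X) (x : iso_ob V W) : iso_ob V X :=
  IsoElt (DQmap_img h (valP x)).
Arguments iso_mor V {W X} h x.

Lemma iso_mor_linear (V W X : qspace) (h : SpHom W X) : linmap (iso_mor V h).
Proof. by move=> a u v; apply: val_inj; apply/ffunP=> g; rewrite /= !ffunE. Qed.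

Lemma iso_mor_id (V W : qspace) (x : iso_ob V W) : iso_mor V (spid W) x = x.
Proof.
by apply: val_inj; apply/ffunP=> g; rewrite /= ffunE sptr_id spcomps1.
Qed.

Lemma iso_mor_comp (V U W X : qspace) (f : SpHom U W) (g : SpHom W X)
    (x : iso_ob V U) :
  iso_mor V (spcomp f g) x = iso_mor V g (iso_mor V f x).
Proof.
by apply: val_inj; apply/ffunP=> k; rewrite /= !ffunE sptr_comp spcompA.
Qed.

Definition isoF (V : qspace) : Func :=
  MkFunc (fun W => iso_ob V W) (fun W X h => iso_mor V h)
    (fun W X h => @iso_mor_linear V W X h) (fun W x => @iso_mor_id V W x)
    (fun U W X f g x => @iso_mor_comp V U W X f g x).

From mathcomp Require Import all_boot all_order all_algebra.
From mathcomp Require classical_sets.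
From Stdlib Require Import Classical ClassicalEpsilon.
Set Implicit Arguments. Unset Strict Implicit. Unset Printing Implicit Defensive.
Import GRing.Theory.
Local Open Scope ring_scope.

(* The proper partial identities [pd D] of [V] ([D] a proper subspace) are
   commuting idempotents, and every span out of [V] that is not defined on all
   of [V] factors through one of them. Hence for every functor [F] the product
   of the [1 - F(pd D)] is a natural idempotent [isoproj] of [F(V)] onto the
   elements killed by all such spans. As [iso_V(W)] consists of the functions on
   [Hom(V, W)] supported on everywhere-defined spans, a natural map
   [iso_V -> F] amounts to such a killed element of [F(V)], and a map
   [F -> iso_V] to a functional on [F(V)] killing the images of the [F(pd D)].
   Projectivity follows by lifting through the epimorphism and applying
   [isoproj]; injectivity by extending a functional along the monomorphism
   (Zorn's lemma) and precomposing with [isoproj]. For (co)generation, push a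
   nonzero element to a space of minimal dimension on which it survives: there
   every [pd D] factors through a smaller space, hence kills it. *)

Lemma F2_cases (a : F2) : a = 0 \/ a = 1.
Proof.
have two : (Zp_trunc (pdiv 2)).+2 = 2%N by [].
case: a => -[|[|n]] lt; [left|right|]; try by apply: val_inj.
by exfalso; move: lt; rewrite two.
Qed.

Lemma addrr_F2 (M : lmodType F2) (v : M) : v + v = 0.
Proof.
have two0 : 1 + 1 = 0 :> F2 by apply: val_inj.
by rewrite -{1 2}(scale1r v) -scalerDl two0 scale0r.
Qed.

Lemma oppr_F2 (M : lmodType F2) (v : M) : - v = v.
Proof. by apply/eqP; rewrite eq_sym -subr_eq0 opprK addrr_F2. Qed.

Section LinMap.
Variables (U V : lmodType F2) (g : U -> V).
Hypothesis g_lin : linmap g.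

Lemma linmap0 : g 0 = 0.
Proof.
have := g_lin 1 0 0; rewrite !scale1r addr0 => g0.
by apply: (addrI (g 0)); rewrite addr0 -g0.
Qed.

Lemma linmapD u v : g (u + v) = g u + g v.
Proof. by have := g_lin 1 u v; rewrite !scale1r. Qed.

Lemma linmapZ (a : F2) u : g (a *: u) = a *: g u.
Proof. by rewrite -[a *: u]addr0 g_lin linmap0 addr0. Qed.

Lemma linmapB u v : g (u - v) = g u - g v.
Proof. by rewrite !oppr_F2 linmapD. Qed.

Lemma linmap_sum (I : Type) (r : seq I) (P : pred I) (F : I -> U) :
  g (\sum_(i <- r | P i) F i) = \sum_(i <- r | P i) g (F i).
Proof.
elim: r => [|i r IH]; first by rewrite !big_nil linmap0.
by rewrite !big_cons; case: (P i); rewrite ?linmapD IH.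
Qed.
End LinMap.

Lemma linmap_F2 (U V : lmodType F2) (g : U -> V) :
  (forall u v, g (u + v) = g u + g v) -> linmap g.
Proof.
move=> gD a u v; rewrite gD; case: (F2_cases a) => ->; last by rewrite !scale1r.
have g0 : g 0 = 0 by rewrite -(addrr_F2 (g 0)) -gD addr0.
by rewrite !scale0r g0.
Qed.

Section LinearExtension.
Variable M : lmodType F2.

Definition additive_graph (A : M * F2 -> Prop) : Prop :=
  (forall m a b, A (m, a) -> A (m, b) -> a = b) /\
  (forall p q, A p -> A q -> A (p.1 + q.1, p.2 + q.2)).

Lemma additive_graph_chain (R : M * F2 -> Prop) (C : (M * F2 -> Prop) -> Prop) :
  additive_graph R -> (forall B, C B -> additive_graph (fun p => R p \/ B p)) ->
  classical_sets.total_on C classical_sets.subset ->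
  additive_graph (fun p => R p \/ classical_sets.bigcup C id p).
Proof.
move=> gR gC totC.
have common p q : R p \/ classical_sets.bigcup C id p ->
    R q \/ classical_sets.bigcup C id q ->
    exists2 A, additive_graph A &
      [/\ A p, A q & forall r, A r -> R r \/ classical_sets.bigcup C id r].
  move=> [Rp|[B CB Bp]] [Rq|[B' CB' Bq]].
  - by exists R => //; split=> // r; left.
  - exists (fun r => R r \/ B' r); first exact: gC.
    by split; [left | right | move=> r [|Br]; [left | right; exists B']].
  - exists (fun r => R r \/ B r); first exact: gC.
    by split; [right | left | move=> r [|Br]; [left | right; exists B]].
  have [BB'|B'B] := totC B B' CB CB'.
    exists (fun r => R r \/ B' r); first exact: gC.
    by split; [right; exact: BB' | right | move=> r [|Br]; [left | right; exists B']].
  exists (fun r => R r \/ B r); first exact: gC.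
  by split; [right | right; exact: B'B | move=> r [|Br]; [left | right; exists B]].
split.
- by move=> m a b pa pb; have [A [fA _] [Aa Ab _]] := common _ _ pa pb; exact: fA Aa Ab.
- by move=> p q pp pq; have [A [_ cA] [Ap Aq sA]] := common _ _ pp pq; exact/sA/cA.
Qed.

Lemma additive_graph_equiv (A A' : M * F2 -> Prop) :
  (forall p, A p <-> A' p) -> additive_graph A -> additive_graph A'.
Proof.
move=> AA' [fA cA]; split=> [m a b /AA' Aa /AA' Ab | p q /AA' Ap /AA' Aq].
  exact: fA Aa Ab.
exact/AA'/cA.
Qed.

(* The graph extended to [dom A + F_2 m] by [m |-> 0]. *)
Lemma additive_graph_adjoin (A : M * F2 -> Prop) (m : M) :
  additive_graph A -> A (0, 0) -> (forall a, ~ A (m, a)) ->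
  additive_graph (fun p => A p \/ exists2 q, A q & p = (q.1 + m, q.2)).
Proof.
move=> [fA cA] A0 nm; split.
- move=> x a b [Aa|[[y c] Ac [-> ->]]] [Ab|[[y' c'] Ac' [ex ->]]].
  + exact: fA Aa Ab.
  + by case: (nm (a + c')); have := cA _ _ Aa Ac'; rewrite /= ex addrAC addrr_F2 add0r.
  + by case: (nm (c + b)); have := cA _ _ Ac Ab; rewrite /= addrA addrr_F2 add0r.
  + by move/addIr: ex => /= ey; rewrite -ey in Ac'; exact: fA Ac Ac'.
- move=> p q [Ap|[[y c] Ac ->]] [Aq|[[y' c'] Ac' ->]] /=.
  + by left; exact: cA.
  + by right; exists (p.1 + y', p.2 + c'); [exact: (cA _ (y', c')) | rewrite addrA].
  + by right; exists (y + q.1, c + q.2); [exact: (cA (y, c)) | rewrite addrAC].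
  + by left; rewrite addrACA addrr_F2 addr0; exact: (cA (y, c) (y', c')).
Qed.

Theorem linear_extension (R : M * F2 -> Prop) :
  additive_graph R -> R (0, 0) ->
  exists psi : M -> F2^o, linmap psi /\ forall m a, R (m, a) -> psi m = a.
Proof.
move=> gR R0.
have [B [gB maxB]] : exists B, additive_graph (fun p => R p \/ B p) /\
    forall B', classical_sets.proper B B' -> ~ additive_graph (fun p => R p \/ B' p).
  by apply: classical_sets.Zorn_bigcup => C CP totC; exact: additive_graph_chain.
pose A p := R p \/ B p.
have [fA cA] : additive_graph A := gB.
have A_total m : exists a, A (m, a).
  apply: NNPP => nm; have {}nm a : ~ A (m, a) by move=> Aa; apply: nm; exists a.
  pose B' p := A p \/ exists2 q, A q & p = (q.1 + m, q.2).
  apply: (maxB B').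
    split=> [p Bp | B'B]; first by left; right.
    have /B'B Bm0 : B' (m, 0) by right; exists (0, 0); [left | rewrite add0r].
    by apply: (nm 0); right.
  apply: additive_graph_equiv (additive_graph_adjoin gB (or_introl R0) nm).
  by move=> p; rewrite /B' /A; tauto.
pose psi m : F2^o := if excluded_middle_informative (A (m, 1)) then 1 else 0.
have A_psi m : A (m, psi m).
  rewrite /psi; case: excluded_middle_informative => // nA1.
  by have [a] := A_total m; case: (F2_cases a) => ->.
exists psi; split=> [|m a Ra]; last by apply: fA (A_psi m) _; left.
by apply: linmap_F2 => u v; apply: fA (A_psi _) (cA (u, _) (v, _) (A_psi u) (A_psi v)).
Qed.
End LinearExtension.

Lemma functional_extension (N M : lmodType F2) (i : N -> M) (phi : N -> F2^o) :
  linmap i -> injective i -> linmap phi ->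
  exists psi : M -> F2^o, linmap psi /\ forall x, psi (i x) = phi x.
Proof.
move=> i_lin i_inj phi_lin; pose R p := exists x, p = (i x, phi x).
have gR : additive_graph R.
  split=> [m a b [x [-> ->]] [y [ey ->]] | _ _ [x ->] [y ->]].
    by rewrite (i_inj _ _ ey).
  by exists (x + y); rewrite /= (linmapD i_lin) (linmapD phi_lin).
have R0 : R (0, 0) by exists 0; rewrite (linmap0 i_lin) (linmap0 phi_lin).
have [psi [psi_lin psiE]] := linear_extension gR R0.
by exists psi; split=> // x; apply: psiE; exists x.
Qed.

Lemma separating_functional (N M : lmodType F2) (j : N -> M) (w : M) :
  linmap j -> (forall x, j x != w) ->
  exists psi : M -> F2^o, [/\ linmap psi, forall x, psi (j x) = 0 & psi w = 1].
Proof.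
move=> j_lin jw; pose R (p : M * F2) := exists x, p.1 = j x + p.2 *: w.
have gR : additive_graph R.
  split=> [m a b [x /= ->] [y /= ey] | [m a] [m' b] [x /= ->] [y /= ->]].
    have jxy x' y' c : j x' = j y' + c *: w -> c = 0.
      case: (F2_cases c) => -> // /eqP; rewrite scale1r addrC -subr_eq.
      by rewrite -(linmapB j_lin) (negbTE (jw _)).
    case: (F2_cases a) ey => -> ey; case: (F2_cases b) ey => -> //; rewrite scale0r addr0.
      by move/jxy/esym.
    by move/esym/jxy.
  by exists (x + y); rewrite /= (linmapD j_lin) scalerDl addrACA.
have R0 : R (0, 0) by exists 0; rewrite (linmap0 j_lin) scale0r addr0.
have [psi [psi_lin psiE]] := linear_extension gR R0.
exists psi; split=> // [x|]; apply: psiE; first by exists x; rewrite scale0r addr0.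
by exists 0; rewrite (linmap0 j_lin) scale1r add0r.
Qed.

Section SpanRelations.
Variables V W : qspace.
Implicit Types f g : SpHom V W.

Lemma sp_functional f x y y' : (x, y) \in val f -> (x, y') \in val f -> y = y'.
Proof.
case/sphomP: (valP f) => _ [_ [_ [f1 _]]] xy xy'.
by case: (f1 _ _ xy xy' erefl).
Qed.

Lemma sp_injective f x x' y : (x, y) \in val f -> (x', y) \in val f -> x = x'.
Proof.
case/sphomP: (valP f) => _ [_ [_ [_ [f2 _]]]] xy x'y.
by case: (f2 _ _ xy x'y erefl).
Qed.

Lemma sp_ext f g : (forall x y, ((x, y) \in val f) = ((x, y) \in val g)) -> f = g.
Proof. by move=> fg; apply: val_inj; apply/setP => -[x y]; exact: fg. Qed.

Definition sdom f : {set vec V} := [set x | [exists y, (x, y) \in val f]].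
Definition total f : bool := sdom f == setT.

Lemma totalP f : reflect (forall x, exists y, (x, y) \in val f) (total f).
Proof.
apply: (iffP eqP) => [domT x | tot].
  have : x \in sdom f by rewrite domT inE.
  by rewrite inE => /existsP.
by apply/setP => x; rewrite !inE; apply/existsP; exact: tot.
Qed.
End SpanRelations.

Lemma sp_trE (V W : qspace) (f : SpHom V W) x y :
  ((x, y) \in val (sptr f)) = ((y, x) \in val f).
Proof. by rewrite /= inE. Qed.

Lemma sptrK (V W : qspace) (f : SpHom V W) : sptr (sptr f) = f.
Proof. by apply: sp_ext => x y; rewrite !sp_trE. Qed.

Lemma sp_compE (U V W : qspace) (f : SpHom U V) (g : SpHom V W) x y :
  ((x, y) \in val (spcomp f g)) = [exists w, ((x, w) \in val f) && ((w, y) \in val g)].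
Proof. by rewrite /= inE. Qed.

Lemma sp_idE (V : qspace) (x y : vec V) : ((x, y) \in val (spid V)) = (x == y).
Proof. by rewrite /= inE. Qed.

Lemma total_id (V : qspace) : total (spid V).
Proof. by apply/totalP => x; exists x; rewrite sp_idE. Qed.

Lemma total_spcomp (U V W : qspace) (f : SpHom U V) (g : SpHom V W) :
  total f -> total g -> total (spcomp f g).
Proof.
move=> /totalP tf /totalP tg; apply/totalP => x; have [y xy] := tf x.
by have [z yz] := tg y; exists z; rewrite sp_compE; apply/existsP; exists y; rewrite xy.
Qed.

Lemma total_spcompl (U V W : qspace) (f : SpHom U V) (g : SpHom V W) :
  total (spcomp f g) -> total f.
Proof.
move/totalP=> tfg; apply/totalP=> x; have [y] := tfg x.
by rewrite sp_compE => /existsP [w /andP [xw _]]; exists w.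
Qed.

Lemma spcomp_sptr_eq_id (V W : qspace) (f g : SpHom V W) :
  (spcomp g (sptr f) == spid V) = total f && (g == f).
Proof.
apply/eqP/andP => [gfT | [/totalP tf /eqP ->]]; last first.
  apply: sp_ext => x y; rewrite sp_compE sp_idE; apply/existsP/eqP => [[w]|<-].
    by move=> /andP [xw]; rewrite sp_trE => yw; exact: sp_injective xw yw.
  by have [w xw] := tf x; exists w; rewrite sp_trE xw.
have common x : exists2 w, (x, w) \in val g & (x, w) \in val f.
  have : (x, x) \in val (spcomp g (sptr f)) by rewrite gfT sp_idE.
  by rewrite sp_compE => /existsP [w /andP [xw]]; rewrite sp_trE; exists w.
split; first by apply/totalP => x; have [w _ xw] := common x; exists w.
apply/eqP/sp_ext => x y; have [w gxw fxw] := common x; apply/idP/idP => xy.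
  by rewrite (sp_functional xy gxw).
by rewrite (sp_functional xy fxw).
Qed.

Definition is_subspace (V : qspace) (D : {set vec V}) : bool :=
  (0 \in D) && [forall x in D, forall y in D, x + y \in D].

Lemma is_subspaceP (V : qspace) (D : {set vec V}) :
  reflect (0 \in D /\ forall x y, x \in D -> y \in D -> x + y \in D) (is_subspace D).
Proof.
apply: (iffP andP) => [[D0 /forall_inP DD] | [D0 DD]]; split=> //.
  by move=> x y xD yD; move/forall_inP: (DD x xD); apply.
by apply/forall_inP => x xD; apply/forall_inP => y yD; exact: DD.
Qed.

Section PartialIdentity.
Variables (V : qspace) (D : {set vec V}).
Hypothesis subD : is_subspace D.

Definition pd_set : {set vec V * vec V} := [set p | (p.1 == p.2) && (p.1 \in D)].

Lemma pd_set_sphom : is_sphom pd_set.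
Proof.
have [D0 DD] := is_subspaceP _ subD.
apply/sphomP; do ![split].
- by rewrite inE /= eqxx D0.
- move=> [x y] [x' y']; rewrite !inE /= => /andP [/eqP <- xD] /andP [/eqP <- x'D].
  by rewrite eqxx DD.
- move=> a [x y]; rewrite !inE /= => /andP [/eqP <- xD]; rewrite eqxx /=.
  by case: (F2_cases a) => ->; rewrite ?scale0r ?scale1r.
- by move=> [x y] [x' y']; rewrite !inE /= => /andP [/eqP <- _] /andP [/eqP <- _] ->.
- by move=> [x y] [x' y']; rewrite !inE /= => /andP [/eqP <- _] /andP [/eqP <- _] /= ->.
- by move=> [x y]; rewrite !inE /= => /andP [/eqP <- _].
Qed.
End PartialIdentity.

(* The junk value [spid V] is only taken when [D] is not a subspace. *)
Definition pd (V : qspace) (D : {set vec V}) : SpHom V V := insubd (spid V) (pd_set D).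

Section PartialIdentities.
Variable V : qspace.
Implicit Types D E : {set vec V}.

Lemma pdE D x y : is_subspace D -> ((x, y) \in val (pd D)) = (x == y) && (x \in D).
Proof. by move=> subD; rewrite /pd val_insubd pd_set_sphom // inE. Qed.

Lemma is_subspaceI D E : is_subspace D -> is_subspace E -> is_subspace (D :&: E).
Proof.
move=> /is_subspaceP [D0 DD] /is_subspaceP [E0 EE]; apply/is_subspaceP.
by split=> [|x y]; rewrite !inE ?D0 ?E0 // => /andP [xD xE] /andP [yD yE]; rewrite DD ?EE.
Qed.

Lemma pd_comp D E : is_subspace D -> is_subspace E -> spcomp (pd D) (pd E) = pd (D :&: E).
Proof.
move=> subD subE; apply: sp_ext => x y; rewrite sp_compE pdE ?is_subspaceI // inE.
apply/existsP/idP => [[w]|/andP [/eqP <- /andP [xD xE]]].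
  by rewrite !pdE // => /andP [/andP [/eqP <- ->] /andP [-> ->]].
by exists x; rewrite !pdE // eqxx xD xE.
Qed.

Lemma pd_comm D E : is_subspace D -> is_subspace E ->
  spcomp (pd D) (pd E) = spcomp (pd E) (pd D).
Proof. by move=> subD subE; rewrite !pd_comp // setIC. Qed.

Lemma pd_idem D : is_subspace D -> spcomp (pd D) (pd D) = pd D.
Proof. by move=> subD; rewrite pd_comp // setIid. Qed.

Lemma sptr_pd D : is_subspace D -> sptr (pd D) = pd D.
Proof.
move=> subD; apply: sp_ext => x y; rewrite sp_trE !pdE //.
by case: eqP => [->|]; rewrite ?eqxx // eq_sym => /eqP /negbTE ->.
Qed.

Lemma pd_nontotal D : is_subspace D -> D != setT -> ~~ total (pd D).
Proof.
move=> subD; apply: contra => /totalP pdT; apply/eqP/setP => x; rewrite inE.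
by have [y] := pdT x; rewrite pdE // => /andP [_ ->].
Qed.

Definition proper_subspaces : seq {set vec V} :=
  [seq D <- enum {set vec V} | is_subspace D && (D != setT)].

Lemma mem_proper_subspaces D :
  (D \in proper_subspaces) = is_subspace D && (D != setT).
Proof. by rewrite mem_filter mem_enum andbT. Qed.

Lemma all_proper_subspaces : all (@is_subspace V) proper_subspaces.
Proof. by apply/allP => D; rewrite mem_proper_subspaces => /andP []. Qed.

Lemma proper_subspace_subspace D : D \in proper_subspaces -> is_subspace D.
Proof. by rewrite mem_proper_subspaces => /andP []. Qed.

Lemma proper_subspace_nontotal D : D \in proper_subspaces -> ~~ total (pd D).
Proof. by rewrite mem_proper_subspaces => /andP [subD DT]; exact: pd_nontotal. Qed.
End PartialIdentities.

Section Domain.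
Variables (V W : qspace) (f : SpHom V W).

Lemma sdom_subspace : is_subspace (sdom f).
Proof.
case/sphomP: (valP f) => f0 [fD _]; apply/is_subspaceP; split.
  by rewrite inE; apply/existsP; exists 0.
move=> x x'; rewrite !inE => /existsP [y xy] /existsP [y' xy'].
by apply/existsP; exists (y + y'); exact: (fD (x, y) (x', y')).
Qed.

Lemma pd_sdom : spcomp (pd (sdom f)) f = f.
Proof.
apply: sp_ext => x y; rewrite sp_compE; apply/existsP/idP => [[w]|xy].
  by rewrite pdE ?sdom_subspace // => /andP [/andP [/eqP <- _]].
exists x; rewrite pdE ?sdom_subspace // eqxx xy /= inE andbT.
by apply/existsP; exists y.
Qed.

Lemma sptr_pd_sdom : spcomp (sptr f) (pd (sdom f)) = sptr f.
Proof.
by have := congr1 (@sptr _ _) pd_sdom; rewrite sptr_comp sptr_pd // sdom_subspace.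
Qed.
End Domain.

Lemma Fmor0 (F : Func) (V W : qspace) (f : SpHom V W) : Fmor F f 0 = 0.
Proof. exact: linmap0 (Fmor_linear F _ _ f). Qed.

Section PdProjection.
Variable F : Func.

(* Over F_2, [y + F(pd D) y] is [(1 - F(pd D)) y]. *)
Definition pd_proj (V : qspace) (s : seq {set vec V}) (x : F V) : F V :=
  foldr (fun D y => y + Fmor F (pd D) y) x s.

Variable V : qspace.
Implicit Types (s : seq {set vec V}) (D : {set vec V}).

Lemma pd_proj_linear s : linmap (pd_proj s).
Proof.
move=> a u v; elim: s => [|D s IH] //=.
by rewrite IH (Fmor_linear F) addrACA scalerDr.
Qed.

Lemma pd_proj_kill s D x : all (@is_subspace V) s -> D \in s ->
  Fmor F (pd D) (pd_proj s x) = 0.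
Proof.
have Flin := Fmor_linear F _ _ (pd D).
elim: s => [|D' s IH] //= /andP [subD' subs]; rewrite inE => /orP [/eqP eD| Ds].
  by rewrite -eD (linmapD Flin) -Fmor_comp pd_idem ?eD // addrr_F2.
have subD : is_subspace D by move/allP: subs; apply.
rewrite (linmapD Flin) -Fmor_comp pd_comm // Fmor_comp IH //.
by rewrite Fmor0 addr0.
Qed.

Lemma pd_proj_id s y : (forall D, D \in s -> Fmor F (pd D) y = 0) -> pd_proj s y = y.
Proof.
elim: s => [|D s IH] //= ys; rewrite IH ?ys ?mem_head ?addr0 // => D' D's.
by apply: ys; rewrite inE D's orbT.
Qed.

Lemma Fmor_pd_proj s D x : all (@is_subspace V) s -> is_subspace D ->
  Fmor F (pd D) (pd_proj s x) = pd_proj s (Fmor F (pd D) x).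
Proof.
move=> + subD; elim: s => [|D' s IH] //= /andP [subD' subs].
by rewrite (linmapD (Fmor_linear F _ _ _)) -Fmor_comp pd_comm // Fmor_comp IH.
Qed.

Lemma functional_pd_proj s (phi : F V -> F2^o) x : linmap phi ->
  (forall D y, D \in s -> phi (Fmor F (pd D) y) = 0) -> phi (pd_proj s x) = phi x.
Proof.
move=> phi_lin; elim: s => [|D s IH] //= phis.
rewrite (linmapD phi_lin) phis ?mem_head // addr0 IH // => D' y D's.
by apply: phis; rewrite inE D's orbT.
Qed.

Definition isoproj (x : F V) : F V := pd_proj (proper_subspaces V) x.

Lemma isoproj_linear : linmap isoproj.
Proof. exact: pd_proj_linear. Qed.

Lemma isoproj_nontotal x (W : qspace) (h : SpHom V W) :
  ~~ total h -> Fmor F h (isoproj x) = 0.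
Proof.
move=> ntot; rewrite -(pd_sdom h) Fmor_comp pd_proj_kill ?all_proper_subspaces //.
  exact: Fmor0.
by rewrite mem_proper_subspaces sdom_subspace.
Qed.
End PdProjection.
Arguments pd_proj F {V} s x.
Arguments isoproj F {V} x.

Lemma pd_proj_natural (F G : Func) (a : NatTrans F G) (V : qspace) s (x : F V) :
  a V (pd_proj F s x) = pd_proj G s (a V x).
Proof.
elim: s => [|D s IH] //=.
by rewrite (linmapD (nt_linear _ _ a V)) nt_natural IH.
Qed.

Lemma iso_imgP (V W : qspace) (l : FF V W) :
  l \in iso_img V W <-> forall f, ~~ total f -> l f = 0.
Proof.
rewrite iso_imgE; split => [/existsP [phi /eqP <-] f ntot | l0].
  rewrite ffunE big1 // => g _; rewrite spcomp_sptr_eq_id.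
  by case: eqP => [fg|_]; rewrite ?andbF ?mulr0 // -fg (negbTE ntot) mulr0.
apply/existsP; exists l; apply/eqP/ffunP => g; rewrite ffunE (bigD1 g) //= big1 ?addr0.
  rewrite spcomp_sptr_eq_id eqxx andbT.
  by case: (boolP (total g)) => [_|/l0 ->]; rewrite ?mulr1 ?mulr0.
by move=> f fg; rewrite spcomp_sptr_eq_id eq_sym (negbTE fg) andbF mulr0.
Qed.

Definition delta_id (V : qspace) : FF V V := [ffun f => ((f == spid V)%:R : F2)].

Lemma delta_id_iso_img (V : qspace) : delta_id V \in iso_img V V.
Proof.
apply/iso_imgP => f ntot; rewrite ffunE; case: eqP => // fid.
by move: ntot; rewrite fid total_id.
Qed.

(* The image of the basis element [Id_V], which generates [iso_V]. *)
Definition iso_gen (V : qspace) : iso_ob V V := IsoElt (delta_id_iso_img V).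

Lemma iso_mor_gen (V W : qspace) (f g : SpHom V W) :
  val (iso_mor V f (iso_gen V)) g = (total f && (g == f))%:R.
Proof. by rewrite /= !ffunE spcomp_sptr_eq_id. Qed.

Lemma iso_mor_gen_nontotal (V W : qspace) (f : SpHom V W) :
  ~~ total f -> iso_mor V f (iso_gen V) = 0.
Proof.
by move=> ntot; apply: val_inj; apply/ffunP => g; rewrite iso_mor_gen (negbTE ntot) ffunE.
Qed.

Lemma iso_ob_decomp (V W : qspace) (l : iso_ob V W) :
  l = \sum_(f : SpHom V W) val l f *: iso_mor V f (iso_gen V).
Proof.
apply: val_inj; rewrite raddf_sum; apply/ffunP => g.
rewrite sum_ffunE (bigD1 g) //= big1 ?addr0.
  rewrite ffunE iso_mor_gen eqxx andbT.
  case: (boolP (total g)) => [_|ntot]; first by rewrite [RHS]mulr1.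
  by rewrite [RHS]mulr0 ((iso_imgP _).1 (valP l)).
by move=> f fg; rewrite ffunE iso_mor_gen eq_sym (negbTE fg) andbF [LHS]mulr0.
Qed.

Lemma Qmap_linear (V W X : qspace) (h : SpHom W X) : linmap (@Qmap V W X h).
Proof.
move=> a u v; apply/ffunP => g; rewrite !ffunE scaler_sumr -big_split.
by apply: eq_bigr => f _; rewrite !ffunE.
Qed.

Lemma Qmap_id (V W : qspace) (phi : FF V W) : Qmap (spid W) phi = phi.
Proof.
apply/ffunP => g; rewrite ffunE (eq_bigl (fun f => f == g)) ?big_pred1_eq //.
by move=> f; rewrite spcomps1.
Qed.

Lemma Qmap_comp (V U W X : qspace) (f : SpHom U W) (g : SpHom W X) (phi : FF V U) :
  Qmap (spcomp f g) phi = Qmap g (Qmap f phi).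
Proof.
apply/ffunP => k; rewrite !ffunE.
under [RHS]eq_bigr do rewrite ffunE.
rewrite (exchange_big_dep (fun m => spcomp (spcomp m f) g == k)) /=; last first.
  by move=> n m /eqP <- /eqP ->.
apply: eq_big => [m|m mfg]; first by rewrite spcompA.
rewrite (big_pred1 (spcomp m f)) // => n /=.
case: (eqVneq n (spcomp m f)) => [->|_]; first by rewrite andbT spcompA.
by rewrite andbF.
Qed.

Definition QF (V : qspace) : Func :=
  MkFunc (fun W => FF V W) (fun W X h => @Qmap V W X h)
    (fun W X h => @Qmap_linear V W X h) (fun W x => @Qmap_id V W x)
    (fun U W X f g x => @Qmap_comp V U W X f g x).

Lemma DQmap_linear (V W X : qspace) (h : SpHom W X) : linmap (@DQmap V W X h).
Proof. by move=> a u v; apply/ffunP => g; rewrite !ffunE. Qed.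

Lemma DQmap_id (V W : qspace) (l : FF V W) : DQmap (spid W) l = l.
Proof. by apply/ffunP => g; rewrite ffunE sptr_id spcomps1. Qed.

Lemma DQmap_comp (V U W X : qspace) (f : SpHom U W) (g : SpHom W X) (l : FF V U) :
  DQmap (spcomp f g) l = DQmap g (DQmap f l).
Proof. by apply/ffunP => k; rewrite !ffunE sptr_comp spcompA. Qed.

Definition DQF (V : qspace) : Func :=
  MkFunc (fun W => FF V W) (fun W X h => @DQmap V W X h)
    (fun W X h => @DQmap_linear V W X h) (fun W x => @DQmap_id V W x)
    (fun U W X f g x => @DQmap_comp V U W X f g x).

Lemma linmap_zero (U V : lmodType F2) : linmap (fun _ : U => (0 : V)).
Proof. by move=> a u v; rewrite scaler0 addr0. Qed.

Definition nt_zero (F G : Func) : NatTrans F G :=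
  MkNatTrans F G (fun V _ => 0) (fun V => @linmap_zero (F V) (G V))
    (fun V W f x => esym (Fmor0 G f)).

Section Yoneda.
Variables (F : Func) (W : qspace) (x : F W).

Definition yoneda_fun (X : qspace) (phi : FF W X) : F X :=
  \sum_(f : SpHom W X) phi f *: Fmor F f x.

Lemma yoneda_linear X : linmap (@yoneda_fun X).
Proof.
move=> a u v; rewrite /yoneda_fun scaler_sumr -big_split; apply: eq_bigr => f _ /=.
by rewrite !ffunE scalerDl scalerA.
Qed.

Lemma yoneda_natural X Y (h : SpHom X Y) (phi : FF W X) :
  yoneda_fun (Qmap h phi) = Fmor F h (yoneda_fun phi).
Proof.
rewrite /yoneda_fun (linmap_sum (Fmor_linear F _ _ _)).
under eq_bigr do rewrite ffunE scaler_suml.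
rewrite (exchange_big_dep xpredT) //=; apply: eq_bigr => f _.
rewrite (big_pred1 (spcomp f h)); last by move=> g; rewrite eq_sym.
by rewrite (linmapZ (Fmor_linear F _ _ _)) Fmor_comp.
Qed.

Definition yoneda_nt : NatTrans (QF W) F :=
  MkNatTrans (QF W) F (fun X => @yoneda_fun X) (fun X => @yoneda_linear X)
    (fun X Y h phi => @yoneda_natural X Y h phi).

Lemma yoneda_delta_id : yoneda_fun (delta_id W) = x.
Proof.
rewrite /yoneda_fun (bigD1 (spid W)) //= big1 ?addr0.
  by rewrite ffunE eqxx scale1r Fmor_id.
by move=> f fid; rewrite ffunE (negbTE fid) scale0r.
Qed.
End Yoneda.

Section FromIso.
Variables (F : Func) (V : qspace) (x : F V).
Hypothesis x_killed : forall W (h : SpHom V W), ~~ total h -> Fmor F h x = 0.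

Lemma yoneda_iso_gen W (k : SpHom V W) :
  yoneda_fun x (val (iso_mor V k (iso_gen V))) = Fmor F k x.
Proof.
rewrite /yoneda_fun (bigD1 k) //= big1 ?addr0.
  rewrite -/(val _) iso_mor_gen eqxx andbT.
  by case: (boolP (total k)) => [_|/x_killed ->]; rewrite ?scale1r ?scaler0.
by move=> f fk; rewrite -/(val _) iso_mor_gen (negbTE fk) andbF scale0r.
Qed.

Lemma from_iso_linear W : linmap (fun l : iso_ob V W => yoneda_fun x (val l)).
Proof. by move=> a u v; exact: (yoneda_linear x a (val u) (val v)). Qed.

Lemma from_iso_natural W X (h : SpHom W X) (l : iso_ob V W) :
  yoneda_fun x (val (iso_mor V h l)) = Fmor F h (yoneda_fun x (val l)).
Proof.
have lin := from_iso_linear; have Fh := Fmor_linear F _ _ h.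
rewrite (iso_ob_decomp l) (linmap_sum (@iso_mor_linear V W X h)) !(linmap_sum (lin _)).
rewrite (linmap_sum Fh); apply: eq_bigr => f _.
rewrite (linmapZ (@iso_mor_linear V W X h)) !(linmapZ (lin _)) -iso_mor_comp.
by rewrite !yoneda_iso_gen (linmapZ Fh) Fmor_comp.
Qed.

Definition from_iso : NatTrans (isoF V) F :=
  MkNatTrans (isoF V) F (fun W l => yoneda_fun x (val l)) from_iso_linear
    from_iso_natural.

Lemma from_iso_gen : from_iso V (iso_gen V) = x.
Proof. by have := yoneda_iso_gen (spid V); rewrite iso_mor_id Fmor_id. Qed.
End FromIso.

Section Dual.
Variables (G : Func) (V : qspace) (phi : G V -> F2^o).
Hypothesis phi_lin : linmap phi.

Definition dual_fun (X : qspace) (g : G X) : FF V X :=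
  [ffun f => phi (Fmor G (sptr f) g)].

Lemma dual_linear X : linmap (@dual_fun X).
Proof. by move=> a u v; apply/ffunP => f; rewrite !ffunE (Fmor_linear G) phi_lin. Qed.

Lemma dual_natural X Y (h : SpHom X Y) (g : G X) :
  dual_fun (Fmor G h g) = DQmap h (dual_fun g).
Proof. by apply/ffunP => f; rewrite !ffunE sptr_comp sptrK Fmor_comp. Qed.

Definition dual_nt : NatTrans G (DQF V) :=
  MkNatTrans G (DQF V) (fun X => @dual_fun X) (fun X => @dual_linear X)
    (fun X Y h g => @dual_natural X Y h g).

Hypothesis phi_kill : forall D y, D \in proper_subspaces V -> phi (Fmor G (pd D) y) = 0.

Lemma dual_iso_img X (g : G X) : dual_fun g \in iso_img V X.
Proof.
apply/iso_imgP => f ntot; rewrite ffunE -sptr_pd_sdom Fmor_comp phi_kill //.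
by rewrite mem_proper_subspaces sdom_subspace.
Qed.

Definition to_iso_fun (X : qspace) (g : G X) : iso_ob V X := IsoElt (dual_iso_img g).

Lemma to_iso_linear X : linmap (@to_iso_fun X).
Proof. by move=> a u v; apply: val_inj; exact: dual_linear. Qed.

Lemma to_iso_natural X Y (h : SpHom X Y) (g : G X) :
  to_iso_fun (Fmor G h g) = iso_mor V h (to_iso_fun g).
Proof. by apply: val_inj; exact: dual_natural. Qed.

Definition to_iso : NatTrans G (isoF V) :=
  MkNatTrans G (isoF V) (fun X => @to_iso_fun X) (fun X => @to_iso_linear X)
    (fun X Y h g => @to_iso_natural X Y h g).

Lemma to_iso_val X (g : G X) f : val (to_iso X g) f = phi (Fmor G (sptr f) g).
Proof. by rewrite /= ffunE. Qed.

Lemma to_iso_val_sptr X (g : G X) (k : SpHom X V) :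
  val (to_iso X g) (sptr k) = phi (Fmor G k g).
Proof. by rewrite to_iso_val sptrK. Qed.
End Dual.

Lemma mono_injective (F G : Func) (i : NatTrans F G) : is_mono i ->
  forall W (x x' : F W), i W x = i W x' -> x = x'.
Proof.
move=> i_mono W x x' ixx'; apply/eqP; rewrite -subr_eq0; apply/eqP.
have i_lin := nt_linear _ _ i.
have := i_mono (QF W) (yoneda_nt (x - x')) (nt_zero _ _) _ W (delta_id W).
rewrite /= yoneda_delta_id; apply => X phi.
rewrite /= /yoneda_fun (linmap_sum (i_lin X)) (linmap0 (i_lin X)).
apply: big1 => f _; rewrite (linmapZ (i_lin X)) nt_natural (linmapB (i_lin W)) ixx'.
by rewrite subrr Fmor0 scaler0.
Qed.

(* A functional vanishing on the image of [p] but not at [y] would give two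
   distinct maps [G -> DQ_V] that agree on the image. *)
Lemma epi_surjective (F G : Func) (p : NatTrans F G) : is_epi p ->
  forall V (y : G V), exists x, p V x = y.
Proof.
move=> p_epi V y; apply: NNPP => ny.
have py x : p V x != y by apply/eqP => pxy; apply: ny; exists x.
have [psi [psi_lin psi_p psi_y]] := separating_functional (nt_linear _ _ p V) py.
have agree X x : dual_nt psi_lin X (p X x) = nt_zero G (DQF V) X (p X x).
  by apply/ffunP => g; rewrite /= !ffunE -nt_natural psi_p.
have /(congr1 (fun l : FF V V => l (spid V))) := p_epi _ _ _ agree V y.
by rewrite /= !ffunE sptr_id Fmor_id psi_y => /eqP; rewrite oner_eq0.
Qed.

Lemma nt_yoneda (F G : Func) (a : NatTrans F G) (W X : qspace) (x : F W) (phi : FF W X) :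
  a X (yoneda_fun x phi) = yoneda_fun (a W x) phi.
Proof.
rewrite /yoneda_fun (linmap_sum (nt_linear _ _ a X)); apply: eq_bigr => f _.
by rewrite (linmapZ (nt_linear _ _ a X)) nt_natural.
Qed.

Lemma iso_nt_decomp (G : Func) (V : qspace) (a : NatTrans (isoF V) G) W (l : iso_ob V W) :
  a W l = yoneda_fun (a V (iso_gen V)) (val l).
Proof.
rewrite {1}(iso_ob_decomp l) (linmap_sum (nt_linear _ _ a W)); apply: eq_bigr => f _.
by rewrite (linmapZ (nt_linear _ _ a W)) -[iso_mor V f _]/(Fmor (isoF V) f _) nt_natural.
Qed.

Section IsoprojFunctional.
Variables (G : Func) (V : qspace) (psi : G V -> F2^o).
Hypothesis psi_lin : linmap psi.

Lemma isoproj_functional_linear : linmap (fun y => psi (isoproj G y)).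
Proof. by move=> a u v; rewrite isoproj_linear psi_lin. Qed.

Lemma isoproj_functional_kill D y : D \in proper_subspaces V ->
  psi (isoproj G (Fmor G (pd D) y)) = 0.
Proof.
move=> D_proper; have subD := proper_subspace_subspace D_proper.
rewrite /isoproj -Fmor_pd_proj ?all_proper_subspaces //.
by rewrite pd_proj_kill ?all_proper_subspaces // (linmap0 psi_lin).
Qed.
End IsoprojFunctional.

Lemma isoF_projective (V : qspace) : is_projective (isoF V).
Proof.
move=> F G p h p_epi.
have [x' px'] := epi_surjective p_epi (h V (iso_gen V)).
have p_x : p V (isoproj F x') = h V (iso_gen V).
  rewrite pd_proj_natural px' pd_proj_id // => D D_proper.
  rewrite -[Fmor G _ _]nt_natural /= iso_mor_gen_nontotal ?proper_subspace_nontotal //.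
  exact: (linmap0 (nt_linear _ _ h V)).
exists (from_iso (isoproj_nontotal x')) => W l.
by rewrite [RHS]iso_nt_decomp /= nt_yoneda p_x.
Qed.

(* Extend [x |-> h(x)(Id_V)] along [i_V] and precompose with [isoproj]. *)
Lemma isoF_injective (V : qspace) : is_injective (isoF V).
Proof.
move=> F G i h i_mono.
pose phi0 (x : F V) : F2^o := val (h V x) (spid V).
have phi0_lin : linmap phi0.
  move=> a u v; rewrite /phi0 (nt_linear _ _ h V).
  by rewrite -[val (_ + _)]/(a *: val (h V u) + val (h V v)) !ffunE.
have phi0_kill D x : D \in proper_subspaces V -> phi0 (Fmor F (pd D) x) = 0.
  move=> D_proper; rewrite /phi0 nt_natural /= ffunE spcomp1s.
  rewrite ((iso_imgP _).1 (valP (h V x))) // sptr_pd ?proper_subspace_subspace //.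
  exact: proper_subspace_nontotal.
have [psi [psi_lin psi_i]] :=
  functional_extension (nt_linear _ _ i V) (@mono_injective _ _ i i_mono V) phi0_lin.
exists (to_iso (isoproj_functional_linear psi_lin) (isoproj_functional_kill psi_lin)).
move=> W x; apply: val_inj; apply/ffunP => g.
rewrite to_iso_val -nt_natural /isoproj -pd_proj_natural psi_i.
by rewrite functional_pd_proj // /phi0 nt_natural /= ffunE spcomp1s sptrK.
Qed.

Lemma is_subspace_sum (V : qspace) (D : {set vec V}) (I : finType) (c : I -> F2)
    (d : I -> vec V) :
  is_subspace D -> (forall i, d i \in D) -> \sum_i c i *: d i \in D.
Proof.
case/is_subspaceP=> D0 DD dD; apply: (big_ind (fun v => v \in D)) => // i _.
by case: (F2_cases (c i)) => ->; rewrite ?scale0r ?scale1r.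
Qed.

Section SubQuadraticSpace.
Variables (V : qspace) (D : {set vec V}).
Hypothesis subD : is_subspace D.

Definition Dmx : 'M[F2]_(#|D|, qdim V) := \matrix_(i < #|D|) (enum_val i : vec V).
Definition Dbase := row_base Dmx.
Definition subq_form (v : 'rV[F2]_(\rank Dmx)) : F2 := qform V (v *m Dbase).

Lemma subq_polar x y : polar subq_form x y = polar (qform V) (x *m Dbase) (y *m Dbase).
Proof. by rewrite /polar /subq_form mulmxDl. Qed.

Lemma subq_quad : is_quadratic_form subq_form.
Proof.
have [Q1 [Q2 Q3]] := qform_quad V; split; [|split].
- by move=> a x; rewrite /subq_form -scalemxAl Q1.
- by move=> a x y z; rewrite !subq_polar mulmxDl -scalemxAl Q2.
- by move=> a x y z; rewrite !subq_polar mulmxDl -scalemxAl Q3.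
Qed.

(* [D] with the restricted quadratic form, in coordinates of a basis of [D]. *)
Definition subqspace : qspace := QSpace subq_quad.

Lemma submx_Dmx_mem (u : vec V) : (u <= Dmx)%MS -> u \in D.
Proof.
case/submxP=> w ->; rewrite mulmx_sum_row; apply: is_subspace_sum => // i.
by rewrite rowK enum_valP.
Qed.

Lemma Dbase_mem (v : vec subqspace) : v *m Dbase \in D.
Proof. by apply: submx_Dmx_mem; rewrite -(eq_row_base Dmx) submxMl. Qed.

Lemma Dbase_surj (d : vec V) : d \in D -> exists v : vec subqspace, v *m Dbase = d.
Proof.
move=> dD; have : (row (enum_rank_in dD d) Dmx <= Dbase)%MS.
  by rewrite (eq_row_base Dmx) row_sub.
by case/submxP=> v; rewrite rowK enum_rankK_in // => ->; exists v.
Qed.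

Lemma Dbase_inj : injective (fun v : vec subqspace => v *m Dbase).
Proof. exact: row_free_inj (row_base_free Dmx). Qed.

Lemma subqspace_dim : D != setT -> (qdim subqspace < qdim V)%N.
Proof.
move=> DT; rewrite /= ltn_neqAle rank_leq_col andbT; apply: contra DT => /eqP full.
apply/eqP/setP => v; rewrite inE; apply: submx_Dmx_mem; apply: submx_full.
by rewrite /row_full full.
Qed.

Definition subq_incl_set : {set vec subqspace * vec V} := [set p | p.2 == p.1 *m Dbase].

Lemma subq_incl_sphom : is_sphom subq_incl_set.
Proof.
apply/sphomP; do ![split].
- by rewrite inE /= mul0mx.
- by move=> [x y] [x' y']; rewrite !inE /= => /eqP -> /eqP ->; rewrite mulmxDl.
- by move=> a [x y]; rewrite !inE /= => /eqP ->; rewrite scalemxAl.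
- by move=> [x y] [x' y']; rewrite !inE /= => /eqP -> /eqP -> /= ->.
- by move=> [x y] [x' y']; rewrite !inE /= => /eqP -> /eqP -> /= /Dbase_inj ->.
- by move=> [x y]; rewrite !inE /= => /eqP ->.
Qed.

Definition subq_incl : SpHom subqspace V := exist _ subq_incl_set subq_incl_sphom.

Lemma pd_subq_incl : spcomp (sptr subq_incl) subq_incl = pd D.
Proof.
apply: sp_ext => x y; rewrite sp_compE pdE //; apply/existsP/idP.
  case=> w; rewrite sp_trE /= !inE /= => /andP [/eqP -> /eqP ->].
  by rewrite eqxx Dbase_mem.
case/andP=> /eqP <- xD; have [v vx] := Dbase_surj xD.
by exists v; rewrite sp_trE /= !inE /= vx eqxx.
Qed.
End SubQuadraticSpace.

Lemma pd_factor_lower_dim (V : qspace) (D : {set vec V}) : D \in proper_subspaces V ->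
  exists2 V' : qspace, (qdim V' < qdim V)%N &
    exists (s : SpHom V V') (t : SpHom V' V), spcomp s t = pd D.
Proof.
rewrite mem_proper_subspaces => /andP [subD DT].
exists (subqspace D); first exact: subqspace_dim.
by exists (sptr (subq_incl D)), (subq_incl D); exact: pd_subq_incl.
Qed.

Lemma isometric_spans (V W : qspace) : isometric V W ->
  exists (s : SpHom V W) (t : SpHom W V), spcomp s t = spid V /\ spcomp t s = spid W.
Proof.
case=> sg [sg_lin [[sg' sgK sg'K] sgq]].
have sg_inj : injective sg := can_inj sgK.
pose S : {set vec V * vec W} := [set p | p.2 == sg p.1].
have S_sphom : is_sphom S.
  apply/sphomP; do ![split].
  - by rewrite inE /= (linmap0 sg_lin).
  - by move=> [x y] [x' y']; rewrite !inE /= => /eqP -> /eqP ->; rewrite (linmapD sg_lin).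
  - by move=> a [x y]; rewrite !inE /= => /eqP ->; rewrite (linmapZ sg_lin).
  - by move=> [x y] [x' y']; rewrite !inE /= => /eqP -> /eqP -> /= ->.
  - by move=> [x y] [x' y']; rewrite !inE /= => /eqP -> /eqP -> /= /sg_inj ->.
  - by move=> [x y]; rewrite !inE /= => /eqP ->.
pose s : SpHom V W := exist _ S S_sphom.
exists s, (sptr s); split; apply: sp_ext => x y; rewrite sp_compE sp_idE.
  apply/existsP/idP => [[w]|/eqP <-]; last by exists (sg x); rewrite sp_trE /= !inE /= eqxx.
  by rewrite sp_trE /= !inE /= => /andP [/eqP -> /eqP /sg_inj ->].
apply/existsP/idP => [[w]|/eqP <-]; last by exists (sg' x); rewrite sp_trE /= !inE /= sg'K eqxx.
by rewrite sp_trE /= !inE /= => /andP [/eqP -> /eqP ->].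
Qed.

Lemma min_dim_witness (G : Func) (W : qspace) (z : G W) (V : qspace) (k : SpHom W V) :
  Fmor G k z != 0 ->
  exists (V' : qspace) (k' : SpHom W V'), Fmor G k' z != 0 /\
    forall (U : qspace) (h : SpHom W U), (qdim U < qdim V')%N -> Fmor G h z = 0.
Proof.
have [n] := ubnP (qdim V); elim: n V k => // n IH V k ltVn kz.
have [[U [h [ltUV hz]]]|nosmaller] :=
  classic (exists U (h : SpHom W U), (qdim U < qdim V)%N /\ Fmor G h z != 0).
  by apply: (IH U h) => //; exact: leq_trans ltUV _.
exists V, k; split=> // U h ltUV; apply/eqP; apply: contraT => hz.
by case: nosmaller; exists U, h.
Qed.

Lemma killed_witness (S : qspace -> Prop) (HS : forall V, exists2 W, S W & isometric V W)
    (G : Func) (W : qspace) (z : G W) :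
  z != 0 -> exists2 U, S U & exists k : SpHom W U, Fmor G k z != 0 /\
    forall D, D \in proper_subspaces U -> Fmor G (pd D) (Fmor G k z) = 0.
Proof.
move=> z0; have idz : Fmor G (spid W) z != 0 by rewrite Fmor_id.
have [V [k [kz kmin]]] := min_dim_witness idz.
have pd_kill D : D \in proper_subspaces V -> Fmor G (pd D) (Fmor G k z) = 0.
  move=> /pd_factor_lower_dim [V' ltV'V [s [t <-]]].
  by rewrite Fmor_comp -(Fmor_comp G _ _ _ k s) kmin // Fmor0.
have nontotal_kill (h : SpHom V V) : ~~ total h -> Fmor G h (Fmor G k z) = 0.
  move=> ntot; rewrite -(pd_sdom h) Fmor_comp pd_kill ?Fmor0 //.
  by rewrite mem_proper_subspaces sdom_subspace.
have [U SU /isometric_spans [a [b [ab ba]]]] := HS V.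
exists U => //; exists (spcomp k a); rewrite Fmor_comp; split.
  by apply: contra kz => /eqP kaz; rewrite -[Fmor G k z](Fmor_id G) -ab Fmor_comp kaz Fmor0.
move=> D D_proper; rewrite -Fmor_comp -[spcomp a _]spcomps1 -ba -spcompA.
rewrite Fmor_comp nontotal_kill ?Fmor0 //; apply: contra (proper_subspace_nontotal D_proper).
have b_total : total b by apply: (@total_spcompl _ _ _ b a); rewrite ba total_id.
move=> T; rewrite -[pd D]spcomp1s -ba spcompA.
exact: total_spcomp b_total (total_spcompl T).
Qed.

Lemma nt_neq_witness (F G : Func) (a b : NatTrans F G) :
  ~ nt_eq a b -> exists W (x : F W), a W x - b W x != 0.
Proof.
move=> ab; apply: NNPP => none; apply: ab => W x; apply/eqP; rewrite -subr_eq0.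
by apply: contraT => abx; case: none; exists W, x.
Qed.

Lemma nt_isoproj_Fmor (F G : Func) (a : NatTrans F G) (W U : qspace) (k : SpHom W U)
    (x : F W) :
  a U (isoproj F (Fmor F k x)) = isoproj G (Fmor G k (a W x)).
Proof. by rewrite /isoproj pd_proj_natural nt_natural. Qed.

Section Generation.
Variable S : qspace -> Prop.
Hypothesis HS : forall V, exists2 W, S W & isometric V W.

Lemma isoF_generating : is_generating (fun i : {V : qspace | S V} => isoF (proj1_sig i)).
Proof.
move=> F G a b /nt_neq_witness [W [x abx]].
have [U SU [k [kabx k_kill]]] := killed_witness HS abx.
exists (exist _ U SU), (from_iso (isoproj_nontotal (Fmor F k x))) => agree.
move: kabx; rewrite -[X in X != 0](pd_proj_id k_kill) -/(isoproj G _).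
rewrite (linmapB (Fmor_linear G _ _ k)) (linmapB (@isoproj_linear G U)).
rewrite -(nt_isoproj_Fmor a) -(nt_isoproj_Fmor b).
rewrite -(from_iso_gen (isoproj_nontotal (Fmor F k x))) agree.
by rewrite subrr eqxx.
Qed.

Lemma isoF_cogenerating :
  is_cogenerating (fun i : {V : qspace | S V} => isoF (proj1_sig i)).
Proof.
move=> F G a b /nt_neq_witness [W [x abx]].
have [U SU [k [kabx k_kill]]] := killed_witness HS abx.
have zero_ne (y : G U) : 0 != Fmor G k (a W x - b W x) by rewrite eq_sym.
have [psi [psi_lin _ psi1]] := separating_functional (@linmap_zero (G U) (G U)) zero_ne.
exists (exist _ U SU), (to_iso (isoproj_functional_linear psi_lin) (isoproj_functional_kill psi_lin)) => /= agree.
have /(congr1 (fun l : iso_ob U W => val l (sptr k))) := agree W x.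
rewrite !(to_iso_val_sptr (isoproj_functional_linear psi_lin)) => psi_ab.
have : psi (isoproj G (Fmor G k (a W x - b W x))) = 0.
  rewrite (linmapB (Fmor_linear G _ _ k)) (linmapB (@isoproj_linear G U)).
  by rewrite (linmapB psi_lin) psi_ab subrr.
by rewrite [isoproj G _]pd_proj_id // psi1 => /eqP; rewrite oner_eq0.
Qed.
End Generation.

Theorem corollary4p36 (S : qspace -> Prop)
  (HS : forall V : qspace, exists W : qspace,
          S W /\ isometric V W /\
          (forall W' : qspace, S W' -> isometric V W' -> W' = W)) :
  ((forall V : qspace, S V -> is_projective (isoF V)) /\
   is_generating (fun i : {V : qspace | S V} => isoF (proj1_sig i))) /\
  ((forall V : qspace, S V -> is_injective (isoF V)) /\
   is_cogenerating (fun i : {V : qspace | S V} => isoF (proj1_sig i))).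
Proof.
have HS' V : exists2 W, S W & isometric V W by have [W [SW [VW _]]] := HS V; exists W.
split; split.
- by move=> V _; exact: isoF_projective.
- exact: isoF_generating.
- by move=> V _; exact: isoF_injective.
- exact: isoF_cogenerating.
Qed.
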